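(* Let $R$ be a commutative ring with unit, $M$ an $R$-module, $\mathbf A$ a $k\times l$ matrix with entries in $R$, and $r\ge1$ an integer. (1) If $S\subseteq R$ is a multiplicative subset containing no zero divisors on $M$ (i.e. $sm=0$ with $s\in S$, $m\in M$ implies $m=0$), then $\mathbf A$ is partition regular over $M$ for $r$ colours if and only if it is partition regular over $S^{-1}M$ for $r$ colours. (2) If $R$ is an integral domain with fraction field $K$, then $\mathbf A$ is partition regular over $R$ for $r$ colours if and only if it is partition regular over $K$ (as an $R$-module) for $r$ colours.
   Context: $\mathbf{A}$ is partition regular over an $R$-module $N$ for $r$ colours if for every map $\chi\colon N\to\{1,\dots,r\}$ there is $\mathbf{n}=(n_1,\dots,n_l)^{\intercal}\in N^l$ with $\mathbf{A}\mathbf{n}=0$, $\mathbf{n}\neq 0$ and $\chi(n_1)=\dots=\chi(n_l)$. *)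

From HB Require Import structures.
From mathcomp Require Import all_boot all_order all_algebra.
From mathcomp Require Import boolp.
From mathcomp Require Import generic_quotient fraction ring.

Set Implicit Arguments.
Unset Strict Implicit.
Unset Printing Implicit Defensive.

Import GRing.Theory.
Local Open Scope ring_scope.
Local Open Scope quotient_scope.

(* (the colours {1,...,r} are represented by 'I_r = {0,...,r-1}).           *)
Definition partition_regular (R : pzRingType) (N : lmodType R) (k l : nat)
    (A : 'M[R]_(k, l)) (r : nat) : Prop :=
  forall chi : N -> 'I_r,
    exists n : 'I_l -> N,
      [/\ forall i : 'I_k, \sum_(j < l) A i j *: n j = 0,
          exists j : 'I_l, n j != 0
        & forall j j' : 'I_l, chi (n j) = chi (n j')].

(* Localization S^-1 M of an R-module M at a multiplicative subset S of a    *)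
(* commutative ring R: pairs (m, s) with s \in S (written m/s), modulo       *)
(*      m/s ~ m'/s'  iff  u *: (s' *: m - s *: m') = 0 for some u \in S,     *)
Module Localization.
Section Loc.
Variables (R : comPzRingType) (M : lmodType R) (S : mulrClosed R).

Inductive lfrac := MkLfrac { lfval : M * R; _ : lfval.2 \in S }.
HB.instance Definition _ := [isSub for lfval].
HB.instance Definition _ := [Choice of lfrac by <:].

Definition num (x : lfrac) : M := (lfval x).1.
Definition den (x : lfrac) : R := (lfval x).2.

Lemma denP (x : lfrac) : den x \in S. Proof. by case: x. Qed.

Definition eqv (x y : lfrac) : bool :=
  `[< exists2 u, u \in S & u *: (den y *: num x - den x *: num y) = 0 >].

Lemma eqvP (x y : lfrac) :
  reflect (exists2 u, u \in S & (u * den y) *: num x = (u * den x) *: num y)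
          (eqv x y).
Proof.
apply: (iffP (asboolP _)) => -[u uS H]; exists u => //.
  by apply/eqP; rewrite -!scalerA -subr_eq0 -scalerBr H.
by apply/eqP; rewrite scalerBr !scalerA subr_eq0 H.
Qed.

Lemma eqv_refl : reflexive eqv.
Proof. by move=> x; apply/eqvP; exists 1; rewrite ?rpred1. Qed.

Lemma eqv_sym : symmetric eqv.
Proof. by move=> x y; apply/eqvP/eqvP => -[u uS H]; exists u. Qed.

Lemma eqv_trans : transitive eqv.
Proof.
move=> y x z /eqvP[u uS H1] /eqvP[v vS H2]; apply/eqvP.
exists (u * v * den y); first by rewrite !rpredM ?denP.
apply: (@eq_trans _ _ ((v * den z) *: ((u * den y) *: num x))).
  by rewrite scalerA; congr (_ *: _); ring.
rewrite H1 scalerA.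
apply: (@eq_trans _ _ ((u * den x) *: ((v * den z) *: num y))).
  by rewrite scalerA; congr (_ *: _); ring.
by rewrite H2 scalerA; congr (_ *: _); ring.
Qed.

Canonical eqv_equiv := EquivRel eqv eqv_refl eqv_sym eqv_trans.

Definition type := {eq_quot eqv}.
HB.instance Definition _ : EqQuotient _ eqv type := EqQuotient.on type.
HB.instance Definition _ := Choice.on type.

Lemma eqv_repr x : eqv x (repr (\pi_type x)).
Proof. by apply/(@eqquotP _ _ type); rewrite reprK. Qed.

Definition zerof : lfrac := @MkLfrac (0, 1) (rpred1 S).
Definition addf (x y : lfrac) : lfrac :=
  @MkLfrac (den y *: num x + den x *: num y, den x * den y)
           (rpredM (denP x) (denP y)).
Definition oppf (x : lfrac) : lfrac := @MkLfrac (- num x, den x) (denP x).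
Definition scalef (a : R) (x : lfrac) : lfrac :=
  @MkLfrac (a *: num x, den x) (denP x).

Lemma num_addf x y : num (addf x y) = den y *: num x + den x *: num y.
Proof. by []. Qed.
Lemma den_addf x y : den (addf x y) = den x * den y. Proof. by []. Qed.
Lemma num_oppf x : num (oppf x) = - num x. Proof. by []. Qed.
Lemma den_oppf x : den (oppf x) = den x. Proof. by []. Qed.
Lemma num_scalef a x : num (scalef a x) = a *: num x. Proof. by []. Qed.
Lemma den_scalef a x : den (scalef a x) = den x. Proof. by []. Qed.
Lemma num_zerof : num zerof = 0. Proof. by []. Qed.
Lemma den_zerof : den zerof = 1. Proof. by []. Qed.
Definition lfE := (num_addf, den_addf, num_oppf, den_oppf, num_scalef,
  den_scalef, num_zerof, den_zerof).

Lemma addf_eqv x x' y y' : eqv x x' -> eqv y y' -> eqv (addf x y) (addf x' y').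
Proof.
move=> /eqvP[u uS Hx] /eqvP[v vS Hy]; apply/eqvP; exists (u * v).
  by rewrite rpredM.
rewrite /addf /num /den /= -/(num x) -/(num y) -/(den x) -/(den y)
  -/(num x') -/(num y') -/(den x') -/(den y') !scalerDr !scalerA.
apply: (@eq_trans _ _ ((v * den y' * den y) *: ((u * den x') *: num x)
                   + (u * den x' * den x) *: ((v * den y') *: num y))).
  by rewrite !scalerA; congr (_ + _); congr (_ *: _); ring.
apply: (@eq_trans _ _ ((v * den y' * den y) *: ((u * den x) *: num x')
                   + (u * den x' * den x) *: ((v * den y) *: num y'))).
  by congr (_ + _); congr (_ *: _).
by rewrite !scalerA; congr (_ + _); congr (_ *: _); ring.
Qed.

Lemma oppf_eqv x x' : eqv x x' -> eqv (oppf x) (oppf x').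
Proof.
by move=> /eqvP[u uS Hx]; apply/eqvP; exists u => //; rewrite /= !scalerN Hx.
Qed.

Lemma scalef_eqv a x x' : eqv x x' -> eqv (scalef a x) (scalef a x').
Proof.
move=> /eqvP[u uS Hx]; apply/eqvP; exists u => //=.
rewrite /num /den /= -/(num x) -/(num x') -/(den x) -/(den x').
apply: (@eq_trans _ _ (a *: ((u * den x') *: num x))).
  by rewrite !scalerA; congr (_ *: _); ring.
apply: (@eq_trans _ _ (a *: ((u * den x) *: num x'))).
  by congr (_ *: _).
by rewrite !scalerA; congr (_ *: _); ring.
Qed.

Definition zero : type := \pi_type zerof.
Fact op_key : unit. Proof. exact: tt. Qed.
Definition add : type -> type -> type :=
  locked_with op_key (fun x y => \pi_type (addf (repr x) (repr y))).
Definition opp : type -> type :=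
  locked_with op_key (fun x => \pi_type (oppf (repr x))).
Definition scale : R -> type -> type :=
  locked_with op_key (fun a x => \pi_type (scalef a (repr x))).

Lemma pi_add x y : add (\pi_type x) (\pi_type y) = \pi_type (addf x y).
Proof.
rewrite /add locked_withE.
apply/(@eqquotP _ _ type); rewrite eqv_sym; apply: addf_eqv; exact: eqv_repr.
Qed.

Lemma pi_opp x : opp (\pi_type x) = \pi_type (oppf x).
Proof. rewrite /opp locked_withE.
apply/(@eqquotP _ _ type); rewrite eqv_sym; apply: oppf_eqv; exact: eqv_repr. Qed.

Lemma pi_scale a x : scale a (\pi_type x) = \pi_type (scalef a x).
Proof.
rewrite /scale locked_withE.
apply/(@eqquotP _ _ type); rewrite eqv_sym; apply: scalef_eqv; exact: eqv_repr.
Qed.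

Lemma lfrac_eq (x y : lfrac) : num x = num y -> den x = den y -> x = y.
Proof.
case: x y => [[m s] Hs] [[m' s'] Hs'] /= e1 e2; apply: val_inj => /=.
by rewrite /num /den /= in e1 e2; rewrite e1 e2.
Qed.

Lemma addA : associative add.
Proof.
elim/quotW=> x; elim/quotW=> y; elim/quotW=> z; rewrite !pi_add.
congr \pi; apply: lfrac_eq; rewrite !lfE ?mulrA //.
rewrite !scalerDr !scalerA addrA; congr (_ + _ + _); congr (_ *: _); ring.
Qed.

Lemma addC : commutative add.
Proof.
elim/quotW=> x; elim/quotW=> y; rewrite !pi_add; congr \pi.
by apply: lfrac_eq; rewrite !lfE; [exact: addrC | exact: mulrC].
Qed.

Lemma add0 : left_id zero add.
Proof.
elim/quotW=> x; rewrite /zero pi_add; congr \pi.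
by apply: lfrac_eq; rewrite !lfE ?scaler0 ?add0r ?scale1r ?mul1r.
Qed.

Lemma addN : left_inverse zero opp add.
Proof.
elim/quotW=> x; rewrite /zero pi_opp pi_add; apply/(@eqquotP _ _ type)/eqvP.
exists 1; rewrite ?rpred1 // !lfE.
by rewrite scalerN addNr !scaler0.
Qed.

HB.instance Definition _ := GRing.isZmodule.Build type addA addC add0 addN.

Lemma scaleA a b (x : type) : scale a (scale b x) = scale (a * b) x.
Proof.
by elim/quotW: x => x; rewrite !pi_scale; congr \pi; apply: lfrac_eq;
  rewrite !lfE ?scalerA.
Qed.

Lemma scale1 : left_id 1 scale.
Proof.
by elim/quotW=> x; rewrite !pi_scale; congr \pi; apply: lfrac_eq;
  rewrite !lfE ?scale1r.
Qed.

Lemma scaleDr : right_distributive scale (@GRing.add type).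
Proof.
move=> a; elim/quotW=> x; elim/quotW=> y.
rewrite [_ + _]pi_add !pi_scale [_ + _]pi_add; congr \pi.
apply: lfrac_eq; rewrite !lfE //.
by rewrite scalerDr !scalerA; congr (_ + _); congr (_ *: _); ring.
Qed.

Lemma scaleDl (x : type) :
  {morph scale^~ x : a b / a + b >-> (a + b : type)}.
Proof.
move=> a b; elim/quotW: x => x.
rewrite !pi_scale.
have -> : (\pi_type (scalef a x) + \pi_type (scalef b x) : type)
  = \pi_type (addf (scalef a x) (scalef b x)) by exact: pi_add.
apply/(@eqquotP _ _ type)/eqvP.
exists 1; rewrite ?rpred1 // !lfE.
by rewrite scalerDl !scalerDr !scalerA; congr (_ + _); congr (_ *: _); ring.
Qed.

HB.instance Definition _ :=
  GRing.Zmodule_isLmodule.Build R type scaleA scale1 scaleDr scaleDl.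

End Loc.
End Localization.
HB.export Localization.

Notation localization := Localization.type.

(* The fraction field K = {fraction R} of an integral domain R, viewed as an *)
(* R-module via a *: x = a%:F * x.                                           *)
Definition frac_mod (R : idomainType) : Type := {fraction R}.
HB.instance Definition _ (R : idomainType) :=
  GRing.Zmodule.on (frac_mod R).

Section FracMod.
Variable R : idomainType.
Definition frac_scale (a : R) (x : frac_mod R) : frac_mod R :=
  (tofrac a * (x : {fraction R}) : {fraction R}).
Lemma frac_scaleA a b x : frac_scale a (frac_scale b x) = frac_scale (a * b) x.
Proof. by rewrite /frac_scale rmorphM mulrA. Qed.
Lemma frac_scale1 : left_id 1 frac_scale.
Proof. by move=> x; rewrite /frac_scale rmorph1 mul1r. Qed.
Lemma frac_scaleDr : right_distributive frac_scale (@GRing.add (frac_mod R)).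
Proof. by move=> a x y; rewrite /frac_scale mulrDr. Qed.
Lemma frac_scaleDl (x : frac_mod R) :
  {morph frac_scale^~ x : a b / a + b >-> (a + b : frac_mod R)}.
Proof. by move=> a b; rewrite /frac_scale rmorphD mulrDl. Qed.
HB.instance Definition _ := GRing.Zmodule_isLmodule.Build R (frac_mod R)
  frac_scaleA frac_scale1 frac_scaleDr frac_scaleDl.
End FracMod.

From HB Require Import structures.
From mathcomp Require Import all_boot all_order all_algebra.
From mathcomp Require Import fraction generic_quotient.
From mathcomp Require Import all_classical topology.

(* An injective linear map M -> N carries monochromatic solutions in M to
   monochromatic solutions in N.  Conversely, suppose every element of N has a
   multiple, by a scalar acting injectively on N, in the image of M; this holds
   for M -> S^-1 M and for R -> K.  By compactness of the space of colourings of
   N (Tychonoff), partition regularity over N is already witnessed inside a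
   finite set xs, and a common denominator s of xs maps s *: xs into M.  Colour
   each x of xs like the preimage of s *: x: the preimage of s *: n, for a
   monochromatic solution n in xs, is a monochromatic solution in M. *)

Set Implicit Arguments.
Unset Strict Implicit.
Unset Printing Implicit Defensive.

Import GRing.Theory.

Definition monochromatic (T C I : Type) (c : T -> C) (n : I -> T) : Prop :=
  forall i i' : I, c (n i) = c (n i').

Definition colouring_space (X : Type) (C : choiceType) : Type :=
  X -> discrete_topology C.
HB.instance Definition _ X C := Topological.copy (colouring_space X C)
  (prod_topology (fun _ : X => discrete_topology C)).

Section ColouringCompactness.
Local Open Scope classical_set_scope.
Variables (X : choiceType) (C : finType).

Lemma colouring_space_compact : compact [set: colouring_space X C].
Proof.
have := @tychonoff X (fun=> discrete_topology C) (fun=> setT)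
  (fun=> @finite_compact (discrete_topology C) setT (@finite_finset C setT)).
by congr compact; rewrite eqEsubset.
Qed.

Lemma nbhs_agree_on (c : colouring_space X C) (s : seq X) :
  nbhs c [set c' : colouring_space X C | {in s, forall x, c' x = c x}].
Proof.
elim: s => [|x s IHs].
  by apply: (@filterS _ _ _ setT); [move=> c' _ x | exact: filterT].
have nbhs_x : nbhs c [set c' : colouring_space X C | c' x = c x].
  exact: (@proj_continuous X (fun=> discrete_topology C) x c)
    (discrete_set1 (c x)).
apply: filterS (filterI nbhs_x IHs) => c' [/= c'x c's] y.
by rewrite inE => /predU1P[-> //|]; exact: c's.
Qed.

Lemma colouring_compactness l (P : ('I_l -> X) -> Prop) :
  (forall c : X -> C, exists2 n, P n & monochromatic c n) ->
  exists s : seq X, forall c : X -> C,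
    exists n, [/\ P n, forall j, n j \in s & monochromatic c n].
Proof.
move=> mono_all.
(* [F] is the filter of eventually large finite subsets of [X]. *)
pose F := filter_from [set: seq X]
  (fun s => [set t : seq X | {subset s <= t}]).
have F_filter : Filter F.
  apply: filter_from_filter; first by exists [::].
  move=> s t _ _; exists (s ++ t) => // u /= stu.
  by split=> x xin; apply: stu; rewrite mem_cat xin ?orbT.
pose within (s : seq X) (c : X -> C) :=
  exists n, [/\ P n, forall j, n j \in s & monochromatic c n].
have [|s _ sub] := (compact_near_coveringP _).1 colouring_space_compact
  (seq X) F within F_filter.
  move=> c _; have [n Pn mono_n] := mono_all c.
  pose vals := [seq n j | j <- enum 'I_l].
  exists ([set c' : colouring_space X C | {in vals, forall x, c' x = c x}],
          [set t : seq X | {subset vals <= t}]).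
    by split; [exact: nbhs_agree_on | exists vals].
  move=> [c' t] [/= agree sub]; exists n; split=> // [j|j j'].
    by apply: sub; rewrite map_f ?mem_enum.
  by rewrite !agree ?map_f ?mem_enum //; apply: mono_n.
by exists s => c; exact: sub.
Qed.

End ColouringCompactness.

Local Open Scope ring_scope.

Definition regular_scalar (R : pzRingType) (N : lmodType R) (s : R) : Prop :=
  forall x : N, s *: x = 0 -> x = 0.

Lemma partition_regular_inj (R : pzRingType) (M N : lmodType R)
    (f : {linear M -> N}) k l (A : 'M[R]_(k, l)) r :
  injective f -> partition_regular M A r -> partition_regular N A r.
Proof.
move=> f_inj PRM chi; have [n [sol [j nj0] mono]] := PRM (chi \o f).
exists (f \o n); split=> [i|/=|//].
  transitivity (f (\sum_(j < l) A i j *: n j)); last by rewrite sol linear0.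
  by rewrite linear_sum; apply: eq_bigr => j' _; rewrite linearZZ.
by exists j; rewrite -(linear0 f) (inj_eq f_inj).
Qed.

Section RegularDenominators.
Variables (R : comPzRingType) (M N : lmodType R) (f : {linear M -> N}).
Hypothesis f_inj : injective f.
Hypothesis f_denominators :
  forall x : N, exists2 s, regular_scalar N s & exists m, f m = s *: x.

Lemma common_denominator (xs : seq N) :
  exists2 s, regular_scalar N s &
    exists g : N -> M, {in xs, forall x, f (g x) = s *: x}.
Proof.
elim: xs => [|x xs [s s_reg [g gP]]].
  by exists 1 => [y|]; [rewrite scale1r | exists (fun=> 0)].
have [t t_reg [m fm]] := f_denominators x.
exists (t * s); first by move=> y; rewrite -scalerA => /t_reg /s_reg.
exists (fun y => if y == x then s *: m else t *: g y) => y; rewrite inE.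
case: eqP => [-> _ | _ /gP fg]; by rewrite linearZZ ?fm ?fg scalerA // mulrC.
Qed.

Lemma partition_regular_of_denominators k l (A : 'M[R]_(k, l)) r :
  partition_regular N A r -> partition_regular M A r.
Proof.
move=> PRN chi.
pose solution (n : 'I_l -> N) :=
  (forall i, \sum_(j < l) A i j *: n j = 0) /\ exists j, n j != 0.
have [xs xsP] : exists xs : seq N, forall c : N -> 'I_r,
    exists n, [/\ solution n, forall j, n j \in xs & monochromatic c n].
  apply: colouring_compactness => c.
  by have [n [sol nz mono]] := PRN c; exists n.
have [s s_reg [g gP]] := common_denominator xs.
have [n [[sol [j nj0]] n_xs mono]] := xsP (chi \o g).
exists (g \o n); split=> [i|/=|//].
  apply: f_inj; rewrite linear0 linear_sum.
  transitivity (s *: \sum_(j < l) A i j *: n j); last by rewrite sol scaler0.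
  rewrite scaler_sumr; apply: eq_bigr => j' _.
  by rewrite linearZZ /= gP // !scalerA mulrC.
exists j; apply: contra nj0 => /eqP gnj0.
by apply/eqP/s_reg; rewrite -gP // gnj0 linear0.
Qed.

End RegularDenominators.

Local Open Scope quotient_scope.

Section Localization.
Variables (R : comPzRingType) (M : lmodType R) (S : mulrClosed R).
Local Notation N := (localization M S).
Local Notation lfrac := (Localization.lfrac M S).

Lemma localization_scaleE a (x : lfrac) :
  a *: (\pi_N x) = \pi_N (Localization.scalef a x).
Proof. exact: Localization.pi_scale. Qed.

Lemma localization_addE (x y : lfrac) :
  \pi_N x + \pi_N y = \pi_N (Localization.addf x y).
Proof. exact: Localization.pi_add. Qed.

Definition to_localization (m : M) : N :=
  \pi_N (@Localization.MkLfrac R M S (m, 1) (rpred1 S)).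

Fact to_localization_is_linear : linear to_localization.
Proof.
move=> a u v; rewrite /to_localization localization_scaleE localization_addE.
apply/eqquotP/Localization.eqvP; exists 1; rewrite ?rpred1 //.
rewrite !Localization.lfE /Localization.num /Localization.den /=.
by rewrite !mul1r !scale1r.
Qed.

HB.instance Definition _ :=
  GRing.isLinear.Build R M N *:%R to_localization to_localization_is_linear.

Lemma to_localization_inj :
  (forall s, s \in S -> regular_scalar M s) -> injective to_localization.
Proof.
move=> S_reg m1 m2 /eqquotP/Localization.eqvP[u uS].
rewrite /Localization.num /Localization.den /= mulr1 => eq12.
apply/eqP; rewrite -subr_eq0; apply/eqP/(S_reg u uS).
by rewrite scalerBr eq12 subrr.
Qed.

Lemma localization_regular s : s \in S -> regular_scalar N s.
Proof.
move=> sS; elim/quotW => x; rewrite localization_scaleE.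
move=> /eqquotP/Localization.eqvP[u uS].
rewrite !Localization.lfE scaler0 mulr1 scalerA => usx0.
apply/eqquotP/Localization.eqvP; exists (u * s); first by rewrite rpredM.
by rewrite !Localization.lfE mulr1 usx0 scaler0.
Qed.

Lemma localization_denominators (x : N) :
  exists2 s, regular_scalar N s & exists m, to_localization m = s *: x.
Proof.
pose y := repr x; exists (Localization.den y).
  exact/localization_regular/Localization.denP.
exists (Localization.num y); rewrite -[x in RHS]reprK localization_scaleE.
apply/eqquotP/Localization.eqvP; exists 1; rewrite ?rpred1 //.
rewrite !Localization.lfE /Localization.num /Localization.den /=.
by rewrite !mul1r scale1r.
Qed.

End Localization.

Section FractionField.
Variable R : idomainType.

Definition frac_embed (a : R^o) : frac_mod R := @tofrac R a.

Fact frac_embed_is_linear : linear frac_embed.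
Proof. by move=> a u v; rewrite /frac_embed rmorphD rmorphM. Qed.

HB.instance Definition _ :=
  GRing.isLinear.Build R R^o (frac_mod R) *:%R frac_embed frac_embed_is_linear.

Lemma frac_embed_inj : injective frac_embed.
Proof. by move=> a b /eqP; rewrite tofrac_eq => /eqP. Qed.

Lemma frac_mod_regular (s : R) : s != 0 -> regular_scalar (frac_mod R) s.
Proof.
move=> s0 y /eqP; rewrite [_ *: _]/(tofrac _ * _) mulf_eq0 tofrac_eq0.
by rewrite (negbTE s0) => /eqP.
Qed.

Lemma frac_embed_denominators (x : frac_mod R) :
  exists2 s, regular_scalar (frac_mod R) s & exists a, frac_embed a = s *: x.
Proof.
exists (\d_(repr x)); first exact/frac_mod_regular/denom_ratioP.
exists (\n_(repr x)); rewrite [_ *: _]/(tofrac _ * _) /frac_embed.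
rewrite -[X in _ = _ * X]reprK !piE.
apply/eqmodP; rewrite /= FracField.equivfE.
rewrite /FracField.mulf !numden_Ratio ?mulf_neq0 ?oner_neq0 ?denom_ratioP //.
by rewrite !mul1r mulrC.
Qed.

End FractionField.

Theorem proposition1p5 :
  (forall (R : comPzRingType) (M : lmodType R) (S : mulrClosed R)
          (k l : nat) (A : 'M[R]_(k, l)) (r : nat),
      (0 < r)%N ->
      (forall (s : R) (m : M), s \in S -> s *: m = 0 -> m = 0) ->
      (partition_regular M A r <->
       partition_regular (localization M S) A r))
  /\
  (forall (R : idomainType) (k l : nat) (A : 'M[R]_(k, l)) (r : nat),
      (0 < r)%N ->
      (partition_regular R^o A r <-> partition_regular (frac_mod R) A r)).
Proof.
split=> [R M S k l A r _ S_tf | R k l A r _].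
  have S_reg s : s \in S -> regular_scalar M s by move=> sS m; exact: S_tf.
  have loc_inj := to_localization_inj S_reg.
  split; first exact: partition_regular_inj loc_inj.
  apply: (partition_regular_of_denominators loc_inj).
  exact: localization_denominators.
split; first exact: partition_regular_inj (@frac_embed_inj R).
apply: (partition_regular_of_denominators (@frac_embed_inj R)).
exact: frac_embed_denominators.
Qed.
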